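(* Let $G$ be a graph and $D\subseteq V(G)$ such that $V(G)\setminus D$ is a finite set of vertices of finite degree. Let $c:D\to\{0,1\}$ be a coloring of the induced subgraph $G[D]$ which is strongly maximal (in all of $D$, as a coloring of $G[D]$). Then every extension $\tilde c:V(G)\to\{0,1\}$ of $c$ is almost strongly maximal in $D$ (as a coloring of $G$).
   Context: Graphs are simple, undirected, possibly infinite; degree of $v$ is $|N(v)|$; $G[D]$ is the induced subgraph. A coloring of a graph $\Gamma$ is a map $V(\Gamma)\to\{0,1\}$. $\mathit{trans}(c)=\{uv\in E(\Gamma):c(u)\neq c(v)\}$; $c*F$ differs from $c$ exactly on $F$; for finite $F$ consisting of vertices of finite degree, $\mathit{dtrans}(c,F)=|\mathit{trans}(c)\setminus\mathit{trans}(c*F)|-|\mathit{trans}(c*F)\setminus\mathit{trans}(c)|$. $c$ is strongly maximal in $A$ if $\mathit{dtrans}(c,F)\ge0$ for every finite $F\subseteq A$ consisting of vertices of finite degree. Colorings $c,c'$ are close in $A$ if $c\triangle c'=\{v:c(v)\neq c'(v)\}$ is finite, consists of vertices of finite degree, and is contained in $A$. $c$ is almost strongly maximal in $A$ if it is close in $A$ to a coloring strongly maximal in $A$. *)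

From HB Require Import structures.
From mathcomp Require Import all_boot all_order all_algebra.
From mathcomp Require Import boolp classical_sets cardinality.
From mathcomp Require Import finmap.
Set Implicit Arguments. Unset Strict Implicit. Unset Printing Implicit Defensive.
Import Order.TTheory GRing.Theory Num.Theory.
Local Open Scope classical_set_scope.

Definition simple_graph (V : Type) (adj : V -> V -> Prop) : Prop :=
  (forall u v, adj u v -> adj v u) /\ (forall v, ~ adj v v).

(* induced subgraph G[D], on the same vertex type (vertices outside D isolated) *)
Definition induced (V : Type) (adj : V -> V -> Prop) (D : set V) : V -> V -> Prop :=
  fun u v => D u /\ D v /\ adj u v.

Definition nbhd (V : Type) (adj : V -> V -> Prop) (v : V) : set V := [set u | adj v u].

Definition fin_deg (V : Type) (adj : V -> V -> Prop) (v : V) : Prop :=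
  finite_set (nbhd adj v).

Definition flip (V : Type) (c : V -> bool) (F : set V) : V -> bool :=
  fun v => if `[< F v >] then ~~ c v else c v.

(* edges as unordered pairs {u,v} *)
Definition trans (V : Type) (adj : V -> V -> Prop) (c : V -> bool) : set (set V) :=
  [set e | exists u v, [/\ adj u v, c u != c v & e = [set u] `|` [set v]]].

Definition dtrans (V : choiceType) (adj : V -> V -> Prop) (c : V -> bool)
  (F : set V) : int :=
  ((#|` fset_set (trans adj c `\` trans adj (flip c F))|)%:Z
   - (#|` fset_set (trans adj (flip c F) `\` trans adj c)|)%:Z)%R.

Definition strongly_maximal (V : choiceType) (adj : V -> V -> Prop) (A : set V)
  (c : V -> bool) : Prop :=
  forall F : set V, finite_set F -> F `<=` A -> (forall v, F v -> fin_deg adj v) ->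
    (0 <= dtrans adj c F)%R.

Definition close (V : Type) (adj : V -> V -> Prop) (A : set V) (c c' : V -> bool) : Prop :=
  [/\ finite_set [set v | c v != c' v],
      [set v | c v != c' v] `<=` A &
      forall v, c v != c' v -> fin_deg adj v].

Definition almost_strongly_maximal (V : choiceType) (adj : V -> V -> Prop) (A : set V)
  (c : V -> bool) : Prop :=
  exists c', close adj A c c' /\ strongly_maximal adj A c'.

(* Flipping a finite set F of finite-degree vertices only changes edges incident to F, so
   dtrans is a difference of two finite counts, and its values for a colouring of G and for
   its restriction to G[D] differ by at most the number of edges meeting the finite set
   V \ D.  Hence dtrans(c~, .) is bounded below on finite subsets of D; a subset F0 on which
   it is minimal gives the strongly maximal colouring c~ * F0, because flipping F after F0
   is flipping the symmetric difference of F0 and F. *)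
From HB Require Import structures.
From mathcomp Require Import all_boot all_order all_algebra.
From mathcomp Require Import boolp classical_sets cardinality.
From mathcomp Require Import finmap zify.
Set Implicit Arguments. Unset Strict Implicit. Unset Printing Implicit Defensive.
Import Order.TTheory GRing.Theory Num.Theory.
Local Open Scope classical_set_scope.

Lemma card_fset_setDI (T : choiceType) (S B : set T) : finite_set S ->
  #|` fset_set S| = (#|` fset_set (S `\` B)| + #|` fset_set (S `&` B)|)%N.
Proof.
move=> fS; have fSB : finite_set (S `&` B) by apply: finite_setIl.
have -> : S `\` B = S `\` (S `&` B) by apply/seteqP; split=> x /=; tauto.
rewrite fset_setD // -(cardfsID (fset_set (S `&` B)) (fset_set S)) addnC.
congr (_ + _)%N; congr (#|` _|); apply/fsetIidPr.
by rewrite -fset_set_sub // => x [].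
Qed.

Lemma card_setDD_setI (T : choiceType) (A B E : set T) : finite_set E ->
  A `\` B `<=` E -> B `\` A `<=` E ->
  ((#|` fset_set (A `\` B)|)%:Z - (#|` fset_set (B `\` A)|)%:Z =
   (#|` fset_set (A `&` E)|)%:Z - (#|` fset_set (B `&` E)|)%:Z)%R.
Proof.
move=> fE sA sB.
rewrite (card_fset_setDI B (finite_setIr A fE)) (card_fset_setDI A (finite_setIr B fE)).
have -> : (A `&` E) `\` B = A `\` B.
  by apply/seteqP; split=> x /=; [tauto | move=> [Ax nBx]; split=> //; split=> //; exact: sA].
have -> : (B `&` E) `\` A = B `\` A.
  by apply/seteqP; split=> x /=; [tauto | move=> [Bx nAx]; split=> //; split=> //; exact: sB].
have -> : (B `&` E) `&` A = (A `&` E) `&` B by apply/seteqP; split=> x /=; tauto.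
lia.
Qed.

Lemma lbounded_int_argmin (T : Type) (P : T -> Prop) (f : T -> int) (b : int) :
  (exists x, P x) -> (forall x, P x -> (b <= f x)%R) ->
  exists2 x, P x & forall y, P y -> (f x <= f y)%R.
Proof.
move=> [x0 Px0] fb.
pose Q (n : nat) := `[< exists x, P x /\ (f x - b = n%:Z)%R >].
have Q_f x : P x -> Q `|f x - b|%N.
  by move=> Px; apply/asboolP; exists x; split=> //; rewrite gez0_abs // subr_ge0 fb.
have exQ : exists n, Q n by exists `|f x0 - b|%N; apply: Q_f.
case: (ex_minnP exQ) => n /asboolP [x [Px fxn]] minQ.
exists x => // y Py; have yb := fb _ Py.
by have := minQ _ (Q_f _ Py); rewrite -lez_nat gez0_abs ?subr_ge0 //; lia.
Qed.

Section Flip.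
Variable V : Type.

Lemma flip_notin (c : V -> bool) (F : set V) x : ~ F x -> flip c F x = c x.
Proof. by rewrite /flip; case: asboolP. Qed.

Lemma flip_in (c : V -> bool) (F : set V) x : F x -> flip c F x = ~~ c x.
Proof. by rewrite /flip; case: asboolP. Qed.

Lemma flip_neqE (c : V -> bool) (F : set V) : [set v | c v != flip c F v] = F.
Proof.
apply/seteqP; split=> x /=; last by move=> Fx; rewrite flip_in //; case: (c x).
by have [//|nFx] := pselect (F x); rewrite flip_notin // eqxx.
Qed.

Lemma flip_flip (c : V -> bool) (F G : set V) :
  flip (flip c F) G = flip c ((F `\` G) `|` (G `\` F)).
Proof.
apply/funext => x; rewrite /flip.
case: (asboolP (F x)) => Fx; case: (asboolP (G x)) => Gx;
  case: asboolP => /= FGx; rewrite ?negbK //; exfalso; tauto.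
Qed.

End Flip.

Section Incident.
Variables (V : choiceType) (adj : V -> V -> Prop).
Hypothesis adj_sym : forall u v, adj u v -> adj v u.

Definition admissible (A F : set V) : Prop :=
  [/\ finite_set F, F `<=` A & forall v, F v -> fin_deg adj v].

Definition incident (S : set V) : set (set V) :=
  [set e | exists u v, [/\ adj u v, S u & e = [set u] `|` [set v]]].

Lemma finite_incident (S : set V) :
  finite_set S -> (forall v, S v -> fin_deg adj v) -> finite_set (incident S).
Proof.
move=> fS fdS.
apply: (@sub_finite_set _ _ (\bigcup_(u in S) ((fun v => [set u] `|` [set v]) @` nbhd adj u))).
  by move=> e [u [v [auv Su ->]]]; exists u => //; exists v.
by apply: bigcup_finite => // u Su; apply: finite_image; apply: fdS.
Qed.

Lemma trans_setD_incident (R : V -> V -> Prop) (S : set V) (c1 c2 : V -> bool) :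
  (forall u v, R u v -> adj u v) -> (forall x, ~ S x -> c1 x = c2 x) ->
  trans R c1 `\` trans R c2 `<=` incident S.
Proof.
move=> Radj c12 e [[u [v [Ruv cuv ->]]] ntr].
have [Su|nSu] := pselect (S u); first by exists u, v; split => //; apply: Radj.
have [Sv|nSv] := pselect (S v).
  by exists v, u; split => //; [apply/adj_sym/Radj | rewrite setUC].
by exfalso; apply: ntr; exists u, v; split => //; rewrite -!c12.
Qed.

Lemma dtrans_incidentE (R : V -> V -> Prop) (S F : set V) (c : V -> bool) :
  (forall u v, R u v -> adj u v) ->
  finite_set S -> (forall v, S v -> fin_deg adj v) -> F `<=` S ->
  dtrans R c F = ((#|` fset_set (trans R c `&` incident S)|)%:Z -
                  (#|` fset_set (trans R (flip c F) `&` incident S)|)%:Z)%R.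
Proof.
move=> Radj fS fdS FS; have c_flip x : ~ S x -> c x = flip c F x.
  by move=> nSx; rewrite flip_notin // => /FS.
rewrite /dtrans; apply: card_setDD_setI; first exact: finite_incident.
  by apply: trans_setD_incident.
by apply: trans_setD_incident => // x /c_flip.
Qed.

Lemma dtrans_flip (c : V -> bool) (F G : set V) :
  admissible setT F -> admissible setT G ->
  dtrans adj (flip c F) G =
  (dtrans adj c ((F `\` G) `|` (G `\` F)) - dtrans adj c F)%R.
Proof.
move=> [fF _ fdF] [fG _ fdG].
have fFG : finite_set (F `|` G) by rewrite finite_setU.
have fdFG v : (F `|` G) v -> fin_deg adj v by case=> [/fdF|/fdG].
have FGsub : (F `\` G) `|` (G `\` F) `<=` F `|` G by move=> x [[]|[]]; [left|right].
have F_FG : F `<=` F `|` G by move=> x; left.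
have G_FG : G `<=` F `|` G by move=> x; right.
rewrite !(@dtrans_incidentE adj (F `|` G)) // flip_flip; lia.
Qed.

Lemma close_flip (A F : set V) (c : V -> bool) : admissible A F -> close adj A c (flip c F).
Proof.
move=> [fF FA fdF]; rewrite /close flip_neqE; split => // v cFv.
by apply: fdF; rewrite -(flip_neqE c F).
Qed.

Lemma almost_strongly_maximal_of_dtrans_lbounded (A : set V) (c : V -> bool) (b : int) :
  (forall F, admissible A F -> (b <= dtrans adj c F)%R) ->
  almost_strongly_maximal adj A c.
Proof.
move=> dtrans_b.
have adm0 : admissible A set0 by split => //; exact: finite_set0.
have [F0 admF0 F0_min] := lbounded_int_argmin (ex_intro _ _ adm0) dtrans_b.
exists (flip c F0); split; first exact: close_flip.
move=> F fF FA fdF.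
have [fF0 F0A fdF0] := admF0.
rewrite dtrans_flip ?subr_ge0; [|by split..].
apply: F0_min; split.
- by rewrite finite_setU; split; apply: finite_setD.
- by move=> x [[/F0A]|[/FA]].
- by move=> x [[/fdF0]|[/fdF]].
Qed.

End Incident.

Section Restriction.
Variables (V : choiceType) (adj : V -> V -> Prop) (D : set V).
Hypothesis adj_sym : forall u v, adj u v -> adj v u.
Hypothesis fin_compl : finite_set (~` D).
Hypothesis fin_deg_compl : forall v, ~ D v -> fin_deg adj v.
Variables (c ct : V -> bool).
Hypothesis c_max : strongly_maximal (induced adj D) D c.
Hypothesis ct_ext : forall v, D v -> ct v = c v.

Let X := incident adj (~` D).

Lemma dtrans_ge_incident_compl (F : set V) :
  admissible adj D F -> (- (#|` fset_set X|)%:Z <= dtrans adj ct F)%R.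
Proof.
move=> [fF FD fdF].
have fX : finite_set X by apply: finite_incident.
have induced_adj u v : induced adj D u v -> adj u v by move=> [_ []].
pose E := incident adj F.
have fE : finite_set E by apply: finite_incident.
have fdiF v : F v -> fin_deg (induced adj D) v.
  by move=> /fdF; apply: sub_finite_set => u [_ []].
have := c_max fF FD fdiF.
rewrite !(@dtrans_incidentE _ adj adj_sym _ F) //.
have trans_c_le : (#|` fset_set (trans (induced adj D) c `&` E)| <=
                   #|` fset_set (trans adj ct `&` E)|)%N.
  apply: fsubset_leq_card; rewrite -fset_set_sub; try exact: finite_setIr.
  move=> e [[u [v [[Du [Dv auv]] cuv ->]]] Ee]; split=> //.
  by exists u, v; rewrite !ct_ext.
have trans_flip_le : (#|` fset_set (trans adj (flip ct F) `&` E)| <=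
    #|` fset_set ((trans (induced adj D) (flip c F) `&` E) `|` X)|)%N.
  apply: fsubset_leq_card; rewrite -fset_set_sub; first last.
  - by rewrite finite_setU; split => //; exact: finite_setIr.
  - exact: finite_setIr.
  move=> e [[u [v [auv fuv ->]]] Ee].
  have [Du|nDu] := pselect (D u); last by right; exists u, v.
  have [Dv|nDv] := pselect (D v); last first.
    by right; exists v, u; split=> //; [apply: adj_sym | rewrite setUC].
  by left; split=> //; exists u, v; move: fuv; rewrite /flip !ct_ext.
move: trans_flip_le; rewrite fset_setU //; last exact: finite_setIr.
have := cardfsUI (fset_set (trans (induced adj D) (flip c F) `&` E)) (fset_set X).
rewrite -/E; lia.
Qed.

End Restriction.

Theorem corollary2p5 (V : choiceType) (adj : V -> V -> Prop) (D : set V) :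
  simple_graph adj ->
  finite_set (~` D) ->
  (forall v, ~ D v -> fin_deg adj v) ->
  forall c : V -> bool,
    strongly_maximal (induced adj D) D c ->
    forall ct : V -> bool, (forall v, D v -> ct v = c v) ->
      almost_strongly_maximal adj D ct.
Proof.
move=> [adj_sym _] fin_compl fin_deg_compl c c_max ct ct_ext.
have dtrans_lbounded := dtrans_ge_incident_compl adj_sym fin_compl fin_deg_compl c_max ct_ext.
exact: (almost_strongly_maximal_of_dtrans_lbounded adj_sym dtrans_lbounded).
Qed.
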